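(* If $n>2$ is even, then there exists more than one $\{1,\dots,n-1\}$-canonical element of $\mathrm{SU}(n)$.
   Context: For $\mathrm{SU}(n)$: $E_i$ is the $n\times n$ diagonal matrix with $(i,i)$ entry $\sqrt{-1}$, others $0$; $\mathfrak t=\{\sum a_iE_i:a_i\in\mathbb R,\sum a_i=0\}$; $H_i=\frac{n-i}{n}(E_1+\dots+E_i)-\frac{i}{n}(E_{i+1}+\dots+E_n)$, $i=1,\dots,n-1$. $\mathfrak I(\mathrm{SU}(n))=\{\sum a_iE_i\in\mathfrak t: a_i\in\mathbb Z\}$. $\mathfrak I'(\mathrm{SU}(n))$ is the set of elements of $\mathfrak I(\mathrm{SU}(n))$ of the form $\sum n_iH_i$ with all $n_i\ge0$. Partial order: $\sum n_iH_i\preceq\sum n_i'H_i$ iff $n_i'\le n_i$ for all $i$. For $I\subseteq\{1,\dots,n-1\}$, $\mathfrak C_I=\{\sum n_iH_i:n_i\ge0,\ n_j>0\iff j\in I\}$; an $I$-canonical element is a maximal element of $(\mathfrak I'(\mathrm{SU}(n))\cap\mathfrak C_I,\preceq)$. *)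

From HB Require Import structures.
From mathcomp Require Import all_boot all_order all_algebra.
Set Implicit Arguments. Unset Strict Implicit. Unset Printing Implicit Defensive.
Import Order.TTheory GRing.Theory Num.Theory.
Local Open Scope ring_scope.

(* An element  sum_i a_i E_i  of the Cartan subalgebra t of su(n) (the factor
   sqrt(-1) is implicit) is represented by its coefficient row vector
   a = (a_1,...,a_n) in 'rV[R]_n; entry j : 'I_n (0-based) is a_(j+1).
   R is an arbitrary real field (the paper uses the reals). *)

Section SU.
Variable R : realFieldType.
Variable n : nat.

Definition in_t (x : 'rV[R]_n) : Prop := \sum_(j < n) x 0 j = 0.

Definition H (i : nat) : 'rV[R]_n :=
  \row_(j < n) (if (j < i)%N then (n - i)%:R / n%:R else - (i%:R / n%:R)).

Definition combH (c : nat -> R) : 'rV[R]_n := \sum_(1 <= i < n) c i *: H i.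

Definition in_I (x : 'rV[R]_n) : Prop :=
  in_t x /\ exists z : 'I_n -> int, forall j, x 0 j = (z j)%:~R.

Definition in_I' (x : 'rV[R]_n) : Prop :=
  in_I x /\ exists c : nat -> R,
    (forall i, (1 <= i < n)%N -> 0 <= c i) /\ x = combH c.

Definition preceq (x y : 'rV[R]_n) : Prop :=
  exists c c' : nat -> R, x = combH c /\ y = combH c' /\
    forall i, (1 <= i < n)%N -> c' i <= c i.

(* the cone C_I, for I a subset of {1,...,n-1} (given as a predicate on nat,
   only its values on 1..n-1 matter) *)
Definition in_C (I : pred nat) (x : 'rV[R]_n) : Prop :=
  exists c : nat -> R, x = combH c /\
    forall j, (1 <= j < n)%N -> 0 <= c j /\ (0 < c j <-> I j).

Definition canonical (I : pred nat) (x : 'rV[R]_n) : Prop :=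
  (in_I' x /\ in_C I x) /\
  forall y, in_I' y -> in_C I y -> preceq x y -> y = x.

End SU.

Definition full_index_set (n : nat) : pred nat := fun j => (1 <= j < n)%N.

From HB Require Import structures.
From mathcomp Require Import all_boot all_order all_algebra.
From mathcomp Require Import zify.
Import Order.TTheory GRing.Theory Num.Theory.
Set Implicit Arguments. Unset Strict Implicit. Unset Printing Implicit Defensive.
Local Open Scope ring_scope.

(* Write x = sum_(1<=i<n) c_i H_i.  The j-th coordinate of x is
   sum_(i > j) c_i - (sum_i i c_i)/n, so consecutive coordinates differ by one
   coefficient, x_(i-1) - x_i = c_i, and the last coordinate is
   -(sum_i i c_i)/n.  Consequently
   - the coefficients c are determined by x, and are integers when x is;
   - for natural coefficients f, combH f is integral iff n | sum_i i f_i.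
   An element of I' in the open cone C_{1..n-1} is therefore sum f_i H_i with
   all f_i >= 1 and n | sum_i i f_i, and it is canonical as soon as no g with
   1 <= g <= f, g <> f, has n | sum_i i g_i (canonical_of_minimal).  Raising the
   all-ones vector at a single index p by the least t with n | sum_i i + p t
   yields such an f (canonical_bump).  For n = 2k we have
   sum_(1<=i<n) i = (k-1) n + k, so raising H_k by 1 and raising H_1 by k give
   two distinct {1,...,n-1}-canonical elements. *)

Lemma sum_nat_indicator (V : pzSemiRingType) (m p i : nat) (F : nat -> V) :
  (m <= i < p)%N -> \sum_(m <= k < p) F k * (k == i)%:R = F i.
Proof.
move=> hi; rewrite (eq_bigr (fun k => if k == i then F k else 0)).
  by rewrite -big_mkcond big_nat1_eq hi.
by move=> k _; case: eqP; rewrite ?mulr1 ?mulr0.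
Qed.

Section Coordinates.
Variable R : realFieldType.
Variable n : nat.

Lemma H_entry (i : nat) (j : 'I_n) : (i < n)%N ->
  H R n i 0 j = (j < i)%:R - i%:R / n%:R.
Proof.
move=> lt_in; rewrite /H mxE.
have n0 : (n%:R : R) != 0 by rewrite pnatr_eq0; lia.
case: ifP => _; last by rewrite add0r.
by rewrite natrB 1?ltnW // mulrBl divff // add0r.
Qed.

Lemma combH_entry (c : nat -> R) (j : 'I_n) :
  combH n c 0 j =
  \sum_(1 <= i < n) c i * (j < i)%:R - (\sum_(1 <= i < n) c i * i%:R) / n%:R.
Proof.
rewrite /combH summxE mulr_suml -sumrB.
by apply: eq_big_nat => i /andP[_ lt]; rewrite mxE H_entry // mulrBr mulrA.
Qed.

Lemma sum_ord_lt (i : nat) : (i <= n)%N -> \sum_(j < n) ((j < i)%:R : R) = i%:R.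
Proof.
move=> le_in.
rewrite -(big_mkord xpredT (fun j => ((j < i)%:R : R))) (big_cat_nat (leq0n i) le_in) /=.
rewrite [X in _ + X](eq_big_nat _ _ (F2 := fun=> 0)); last first.
  by move=> j /andP[le_ij _]; rewrite ltnNge le_ij.
rewrite big1_eq addr0 (eq_big_nat _ _ (F2 := fun=> 1)); last by move=> j /andP[_ ->].
by rewrite sumr_const_nat subn0.
Qed.

Lemma in_t_combH (c : nat -> R) : in_t (combH n c).
Proof.
rewrite /in_t; under eq_bigr do rewrite combH_entry.
have [->|n_gt0] := posnP n; first by rewrite big_ord0.
have n0 : (n%:R : R) != 0 by rewrite pnatr_eq0 -lt0n.
rewrite sumrB -mulr_suml exchange_big /= sumr_const card_ord -[_ *+ n]mulr_natr mulfK //.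
apply/eqP; rewrite subr_eq0; apply/eqP; apply: eq_big_nat => i /andP[_ lt].
by rewrite -mulr_sumr sum_ord_lt // ltnW.
Qed.

Lemma combH_coef (c : nat -> R) (i : nat) (j1 j2 : 'I_n) :
  (1 <= i < n)%N -> val j1 = i.-1 -> val j2 = i ->
  combH n c 0 j1 - combH n c 0 j2 = c i.
Proof.
move=> hi e1 e2; rewrite !combH_entry opprB addrA addrNK -sumrB.
rewrite -(sum_nat_indicator c hi); apply: eq_big_nat => k _.
rewrite -mulrBr e1 e2; congr (_ * _).
case: (ltngtP k i) => h.
- have /negbTE -> : ~~ (i.-1 < k)%N by lia.
  by rewrite subrr.
- have -> : (i.-1 < k)%N by lia.
  by rewrite subrr.
- have -> : (i.-1 < k)%N by lia.
  by rewrite subr0.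
Qed.

Lemma combH_inj (a b : nat -> R) :
  combH n a = combH n b -> forall i, (1 <= i < n)%N -> a i = b i.
Proof.
move=> e i hi; have l1 : (i.-1 < n)%N by lia. have l2 : (i < n)%N by lia.
rewrite -(@combH_coef a i (Ordinal l1) (Ordinal l2)) //.
by rewrite -(@combH_coef b i (Ordinal l1) (Ordinal l2)) // e.
Qed.

Lemma combH_ext (a b : nat -> R) :
  (forall i, (1 <= i < n)%N -> a i = b i) -> combH n a = combH n b.
Proof. by move=> e; apply: eq_big_nat => i hi; rewrite e. Qed.

Lemma combH_last (c : nat -> R) (j : 'I_n) :
  val j = n.-1 -> combH n c 0 j = - ((\sum_(1 <= i < n) c i * i%:R) / n%:R).
Proof.
move=> ej; rewrite combH_entry big_nat big1 ?sub0r // => i /andP[_ lt].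
rewrite ej; have /negbTE -> : ~~ (n.-1 < i)%N by lia.
by rewrite mulr0.
Qed.

End Coordinates.

Section Integrality.
Variable R : realFieldType.
Variable n : nat.
Hypothesis n_gt0 : (0 < n)%N.

Let n_neq0 : (n%:R : R) != 0. Proof. by rewrite pnatr_eq0 -lt0n. Qed.

Let weight_nat (f : nat -> nat) :
  \sum_(1 <= i < n) ((f i)%:R : R) * i%:R = (\sum_(1 <= i < n) i * f i)%N%:R.
Proof. by rewrite natr_sum; apply: eq_bigr => i _; rewrite natrM mulrC. Qed.

Lemma in_I_combH_nat (f : nat -> nat) :
  in_I (combH n (fun i => (f i)%:R : R)) <-> (n %| \sum_(1 <= i < n) i * f i)%N.
Proof.
set S := (\sum_(1 <= i < n) i * f i)%N.
split=> [[_ [z hz]] | dvd_S].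
- have lt_last : (n.-1 < n)%N by lia.
  have := hz (Ordinal lt_last); rewrite combH_last // weight_nat.
  move/eqP; rewrite eqr_oppLR => /eqP /(congr1 (fun x => x * n%:R)).
  rewrite divfK // -[n%:R]/(n%:Z%:~R) -[S%:R]/(S%:Z%:~R) -intrN -intrM.
  move/intr_inj => eS; rewrite -[S]/(`|S%:Z|%N) eS abszM dvdn_mull //.
- split; first exact: in_t_combH.
  exists (fun j : 'I_n => (\sum_(1 <= i < n) f i * (j < i))%N%:Z - (S %/ n)%N%:Z).
  have qE : (S%:R / n%:R : R) = (S %/ n)%:R by rewrite -{1}(divnK dvd_S) natrM mulfK.
  move=> j; rewrite combH_entry intrB -!pmulrn weight_nat qE natr_sum; congr (_ - _).
  by apply: eq_bigr => i _; rewrite natrM.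
Qed.

(* Positive coefficients of an integral combination are natural numbers:
   c_i is the difference of two consecutive (integer) coordinates. *)
Lemma combH_coef_nat (c : nat -> R) :
  in_I (combH n c) -> (forall i, (1 <= i < n)%N -> 0 < c i) ->
  exists g : nat -> nat, forall i, (1 <= i < n)%N -> c i = (g i)%:R.
Proof.
move=> [_ [z hz]] c_gt0.
pose idx k : 'I_n := insubd (Ordinal n_gt0) k.
exists (fun i => `|z (idx i.-1) - z (idx i)|%N) => i hi.
have val_idx k : (k < n)%N -> val (idx k) = k by move=> lt_kn; rewrite val_insubd lt_kn.
have cE : c i = (z (idx i.-1) - z (idx i))%:~R.
  by rewrite -(@combH_coef _ _ c i (idx i.-1) (idx i)) ?val_idx // ?intrB -?hz //; lia.
have pos : (0 < z (idx i.-1) - z (idx i))%R by rewrite -(ltr0z R) -cE c_gt0.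
by rewrite cE -[RHS]/((Posz _)%:~R) gtz0_abs.
Qed.

End Integrality.

(* If every f_i >= 1, n | sum_i i f_i, and f is minimal
   among such vectors (every g with 1 <= g <= f and n | sum_i i g_i equals f),
   then  sum_i f_i H_i  is {1,...,n-1}-canonical: any y above it in I' ∩ C has
   natural coefficients g with 1 <= g <= f and n | sum_i i g_i. *)
Lemma canonical_of_minimal (R : realFieldType) (n : nat) (f : nat -> nat) :
  (0 < n)%N ->
  (forall i, (1 <= i < n)%N -> (0 < f i)%N) ->
  (n %| \sum_(1 <= i < n) i * f i)%N ->
  (forall g : nat -> nat, (forall i, (1 <= i < n)%N -> (0 < g i <= f i)%N) ->
     (n %| \sum_(1 <= i < n) i * g i)%N -> forall i, (1 <= i < n)%N -> g i = f i) ->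
  canonical (full_index_set n) (combH n (fun i => (f i)%:R : R)).
Proof.
move=> n_gt0 f_gt0 dvd_f f_min; split; first split.
- split; first exact/in_I_combH_nat.
  by exists (fun i => (f i)%:R); split=> // i _; apply: ler0n.
- exists (fun i => (f i)%:R); split=> // j hj.
  by split; [apply: ler0n | rewrite ltr0n f_gt0].
move=> y [yI _] [c [y_def c_cone]] [c1 [c2 [ex [ey le_c]]]]; subst y.
have c_gt0 i : (1 <= i < n)%N -> 0 < c i by move=> hi; apply: (c_cone i hi).2.2.
have [g cg] := combH_coef_nat n_gt0 yI c_gt0.
have yE : combH n c = combH n (fun i => (g i)%:R) := combH_ext cg.
have dvd_g : (n %| \sum_(1 <= i < n) i * g i)%N.
  by rewrite -(in_I_combH_nat R n_gt0) -yE.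
have g_le i : (1 <= i < n)%N -> (0 < g i <= f i)%N.
  move=> hi; rewrite -(ltr0n R) -(ler_nat R) -cg // c_gt0 //=.
  by rewrite (combH_inj ey) // (combH_inj ex) // le_c.
by rewrite yE; apply: combH_ext => i hi; rewrite (f_min g g_le dvd_g i hi).
Qed.

Definition bump (p t i : nat) : nat := (1 + (i == p) * t)%N.

Lemma weight_bump (n p t : nat) : (1 <= p < n)%N ->
  (\sum_(1 <= i < n) i * bump p t i = \sum_(1 <= i < n) i + p * t)%N.
Proof.
move=> hp; rewrite /bump.
under eq_bigr do rewrite mulnDr muln1.
rewrite big_split /=; congr (_ + _)%N.
rewrite (eq_bigr (fun i => if i == p then p * t else 0))%N.
  by rewrite -big_mkcond big_nat1_eq hp.
by move=> i _; case: eqP => [->|_]; rewrite ?mul1n ?mul0n ?muln0.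
Qed.

(* Raising H_p by the least t making the weight divisible by n gives a
   canonical element: any smaller admissible g is a bump at p by t' < t. *)
Lemma canonical_bump (R : realFieldType) (n p t : nat) :
  (1 <= p < n)%N ->
  (n %| \sum_(1 <= i < n) i + p * t)%N ->
  (forall s, (s < t)%N -> ~~ (n %| \sum_(1 <= i < n) i + p * s)%N) ->
  canonical (full_index_set n) (combH n (fun i => (bump p t i)%:R : R)).
Proof.
move=> hp dvd_t t_min.
apply: canonical_of_minimal; first lia.
- by move=> i _; rewrite /bump add1n.
- by rewrite weight_bump.
move=> g g_le dvd_g.
have gE i : (1 <= i < n)%N -> g i = bump p (g p).-1 i.
  move=> hi; have := g_le i hi; have := g_le p hp.
  rewrite /bump eqxx; case: eqP => [->|_]; lia.
have dvd_gp : (n %| \sum_(1 <= i < n) i + p * (g p).-1)%N.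
  by rewrite -weight_bump // -(eq_big_nat _ _ (fun i hi => congr1 (muln i) (gE i hi))).
have gp_eq : (g p).-1 = t.
  have := g_le p hp; rewrite /bump eqxx mul1n.
  case: (ltngtP (g p).-1 t) => // [lt_t | gt_t]; last lia.
  by have := t_min _ lt_t; rewrite dvd_gp.
by move=> i hi; rewrite gE // gp_eq.
Qed.

Lemma sum_below_even (k : nat) : (1 <= k)%N ->
  (\sum_(1 <= i < k * 2) i = (k - 1) * (k * 2) + k)%N.
Proof.
move=> k_gt0; have := bin2_sum (k * 2).
rewrite big_ltn; last lia.
by rewrite add0n bin2 (mulnAC k 2) (muln2 (k * _)) doubleK => ->; nia.
Qed.

Lemma not_dvdn_mul_add (d q r : nat) : (0 < r < d)%N -> ~~ (d %| q * d + r)%N.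
Proof. by move=> hr; rewrite /dvdn modnMDl modn_small; lia. Qed.

Theorem mainTheorem12 (R : realFieldType) (n : nat) :
  (2 < n)%N -> ~~ odd n ->
  exists x y : 'rV[R]_n,
    canonical (full_index_set n) x /\ canonical (full_index_set n) y /\ x <> y.
Proof.
move=> n_gt2 n_even.
have [k n_eq] : exists k, n = (k * 2)%N.
  by exists n./2; rewrite -{1}(odd_double_half n) (negbTE n_even) add0n muln2.
subst n; have k_gt1 : (1 < k)%N by lia.
(* Raise H_k by 1, or H_1 by k: both weights equal k * n. *)
have sumE := sum_below_even (ltnW k_gt1).
exists (combH _ (fun i => (bump k 1 i)%:R : R)), (combH _ (fun i => (bump 1 k i)%:R : R)).
split; [|split].
- apply: canonical_bump; first lia.
  + by rewrite sumE; apply/dvdnP; exists k; lia.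
  + move=> s; rewrite ltnS leqn0 => /eqP ->.
    by rewrite sumE muln0 addn0 not_dvdn_mul_add //; lia.
- apply: canonical_bump; first lia.
  + by rewrite sumE; apply/dvdnP; exists k; lia.
  + by move=> s lt_sk; rewrite sumE mul1n -addnA not_dvdn_mul_add //; lia.
- have one_idx : (1 <= 1 < k * 2)%N by lia.
  move/combH_inj => /(_ 1%N one_idx) /eqP.
  by rewrite eqr_nat /bump eqxx; lia.
Qed.
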